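(* Let $R$ be a commutative ring with unit, $M$ an $R$-module, $N$ a submodule of $M$, $\mathbf A$ a $k\times l$ matrix with entries in $R$, and $r,s\ge1$ integers. (1) If $\mathbf A$ is partition regular over $M$ for $r+s$ colours, then either $\mathbf A$ is partition regular over $N$ for $r$ colours or $\mathbf A$ is partition regular over $M/N$ for $s$ colours. (2) If $M=\bigoplus_{i=1}^t M_i$ is a direct sum of finitely many $R$-modules $M_i$, then $\mathbf A$ is partition regular over $M$ if and only if $\mathbf A$ is partition regular over some $M_i$.
   Context: $\mathbf{A}$ is partition regular over an $R$-module $P$ for $r$ colours if for every map $\chi\colon P\to\{1,\dots,r\}$ there is $\mathbf{p}=(p_1,\dots,p_l)^{\intercal}\in P^l$ with $\mathbf{A}\mathbf{p}=0$, $\mathbf{p}\neq 0$ and $\chi(p_1)=\dots=\chi(p_l)$; it is partition regular over $P$ if this holds for every $r\ge1$. *)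

From HB Require Import structures.
From mathcomp Require Import all_boot all_order all_algebra.
Set Implicit Arguments. Unset Strict Implicit. Unset Printing Implicit Defensive.
Import GRing.Theory.
Local Open Scope ring_scope.

Definition mxapp (R : comPzRingType) (M : lmodType R) (k l : nat)
  (A : 'M[R]_(k, l)) (p : 'I_l -> M) : 'I_k -> M :=
  fun i => \sum_(j < l) A i j *: p j.

(* A is partition regular over the subset S of M for r colours
   (colours are 'I_r = {0,...,r-1}); a colouring of S is given by any
   map M -> 'I_r (only its values on S matter). *)
Definition pr_in_col (R : comPzRingType) (M : lmodType R) (k l : nat)
  (A : 'M[R]_(k, l)) (S : {pred M}) (r : nat) : Prop :=
  forall chi : M -> 'I_r,
    exists p : 'I_l -> M,
      (forall j, p j \in S) /\
      (forall i, mxapp A p i = 0) /\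
      (exists j, p j != 0) /\
      (exists c : 'I_r, forall j, chi (p j) = c).

Definition pr_in (R : comPzRingType) (M : lmodType R) (k l : nat)
  (A : 'M[R]_(k, l)) (S : {pred M}) : Prop :=
  forall r, (1 <= r)%N -> pr_in_col A S r.

Definition pr_col (R : comPzRingType) (P : lmodType R) (k l : nat)
  (A : 'M[R]_(k, l)) (r : nat) : Prop := pr_in_col A (@predT P) r.

Definition pr (R : comPzRingType) (P : lmodType R) (k l : nat)
  (A : 'M[R]_(k, l)) : Prop := pr_in A (@predT P).

Definition is_quotient (R : comPzRingType) (M Q : lmodType R) (N : {pred M})
  (pi : {linear M -> Q}) : Prop :=
  (forall q : Q, exists m : M, pi m = q) /\ (forall m : M, pi m = 0 <-> m \in N).

Definition is_direct_sum (R : comPzRingType) (M : lmodType R) (t : nat)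
  (Mi : 'I_t -> {pred M}) : Prop :=
  (forall i, submod_closed (Mi i)) /\
  (forall m : M, exists x : 'I_t -> M,
      (forall i, x i \in Mi i) /\ m = \sum_(i < t) x i) /\
  (forall x y : 'I_t -> M, (forall i, x i \in Mi i) -> (forall i, y i \in Mi i) ->
      \sum_(i < t) x i = \sum_(i < t) y i -> forall i, x i = y i).

From HB Require Import structures.
From mathcomp Require Import all_boot all_order all_algebra.
From Stdlib Require Import Classical.
Set Implicit Arguments. Unset Strict Implicit. Unset Printing Implicit Defensive.
Import GRing.Theory.
Local Open Scope ring_scope.

(* (1) Colour the points of N with r colours and the other points of M, through
   their image in M/N, with s further colours: a monochromatic solution then lies
   either entirely in N, or entirely outside N, in which case its image is a
   nonzero monochromatic solution in M/N.
   (2) If no summand M_i is partition regular, choose on each M_i a bad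
   colouring, all with the same number r of colours, and colour m by the first
   index i at which its component is nonzero together with the colour of that
   component.  The i-th components of a monochromatic solution form a nonzero
   monochromatic solution in M_i, because the projections are linear. *)

Section Colourings.
Variables (R : comPzRingType) (k l : nat) (A : 'M[R]_(k, l)).

Definition mono_solution (M : lmodType R) (S : {pred M}) (C : Type)
    (chi : M -> C) (p : 'I_l -> M) : Prop :=
  (forall j, p j \in S) /\
  (forall i, mxapp A p i = 0) /\
  (exists j, p j != 0) /\
  (exists c : C, forall j, chi (p j) = c).

Lemma linear_mxapp (M Q : lmodType R) (f : {linear M -> Q}) p i :
  f (mxapp A p i) = mxapp A (f \o p) i.
Proof. by rewrite /mxapp linear_sum; apply: eq_bigr => j _; rewrite linearZ. Qed.

Lemma mxapp_linear_eq0 (M Q : lmodType R) (f : {linear M -> Q}) p :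
  (forall i, mxapp A p i = 0) -> forall i, mxapp A (f \o p) i = 0.
Proof. by move=> solp i; rewrite -linear_mxapp solp linear0. Qed.

Lemma pr_in_col_sub (M : lmodType R) (S T : {pred M}) r :
  {subset S <= T} -> pr_in_col A S r -> pr_in_col A T r.
Proof.
move=> sST prS chi; have [p [Sp solp]] := prS chi.
by exists p; split=> // j; apply: sST.
Qed.

Lemma pr_in_col_leq (M : lmodType R) (S : {pred M}) r r' :
  (r <= r')%N -> pr_in_col A S r' -> pr_in_col A S r.
Proof.
move=> le_rr' prS chi.
have [p [Sp [solp [[j0 nzp0] [c chiP]]]]] := prS (fun m => widen_ord le_rr' (chi m)).
exists p; do 3!split=> //; first by exists j0.
exists (chi (p j0)) => j; apply: val_inj.
by have := chiP j; rewrite -(chiP j0) => /(congr1 val).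
Qed.

Lemma pr_in_col_fin (M : lmodType R) (S : {pred M}) (C : finType) :
  pr_in_col A S #|C| -> forall chi : M -> C, exists p, mono_solution S chi p.
Proof.
move=> prS chi; have [p [Sp [solp [nzp [c chiP]]]]] := prS (enum_rank \o chi).
exists p; do 3!split=> //.
by exists (enum_val c) => j; rewrite -(chiP j) /= enum_rankK.
Qed.

Lemma not_pr_in_uniform (M : lmodType R) (t : nat) (S : 'I_t -> {pred M}) :
  (forall i, ~ pr_in A (S i)) -> exists r, forall i, ~ pr_in_col A (S i) r.
Proof.
move=> nprS.
have /fin_all_exists [r nprr] : forall i, exists r, ~ pr_in_col A (S i) r.
  move=> i; have /not_all_ex_not [r nprSr] := nprS i.
  by have [_ nprr] := imply_to_and _ _ nprSr; exists r.
exists (\max_i r i) => i; apply: contra_not (nprr i).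
by apply: pr_in_col_leq; apply: leq_bigmax.
Qed.

Definition join_colouring (T : Type) (N : {pred T}) (r s : nat)
    (chiN : T -> 'I_r) (chiQ : T -> 'I_s) (m : T) : 'I_(r + s) :=
  if m \in N then lshift s (chiN m) else rshift r (chiQ m).

Lemma join_colouring_const (T I : Type) (N : {pred T}) (r s : nat)
    (chiN : T -> 'I_r) (chiQ : T -> 'I_s) (p : I -> T) c :
  (forall j, join_colouring N chiN chiQ (p j) = c) ->
  (exists cN, forall j, p j \in N /\ chiN (p j) = cN) \/
  (exists cQ, forall j, p j \notin N /\ chiQ (p j) = cQ).
Proof.
case: (split_ordP c) => [cN | cQ] -> chiP; [left; exists cN | right; exists cQ];
  move=> j; move: (chiP j); rewrite /join_colouring;
  by case: ifP => _ /eqP; rewrite eq_shift // => /eqP ->.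
Qed.

Lemma pr_colD_in_or_image (M Q : lmodType R) (N : {pred M})
    (pi : {linear M -> Q}) (r s : nat) :
  (forall m, pi m = 0 -> m \in N) ->
  pr_col M A (r + s) -> pr_in_col A N r \/ pr_col Q A s.
Proof.
move=> kerN prM; have [|/not_all_ex_not [chiN noN]] := classic (pr_in_col A N r).
  by left.
right=> chiQ.
have [p [_ [solp [[j0 nzp0] [c chiP]]]]] := prM (join_colouring N chiN (chiQ \o pi)).
case: (join_colouring_const chiP) => [[cN pN] | [cQ pQ]].
  case: noN; exists p; split; first by move=> j; case: (pN j).
  by do 2!split=> //; [exists j0 | exists cN => j; case: (pN j)].
exists (pi \o p); split=> //; split; first exact: mxapp_linear_eq0.
split; last by exists cQ => j; case: (pQ j).
by exists j0; case: (pQ j0) => /negP Np0 _; apply/eqP => /kerN.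
Qed.

End Colourings.

Section DirectSum.
Variables (R : comPzRingType) (M : lmodType R) (t : nat) (Mi : 'I_t -> {pred M}).
Hypothesis dsM : is_direct_sum Mi.

Lemma decomposition_exists (m : M) :
  exists x : {ffun 'I_t -> M}, [forall i, x i \in Mi i] && (m == \sum_i x i).
Proof.
have [x [Mx ->]] := proj1 (proj2 dsM) m.
exists (finfun x); apply/andP; split; first by apply/forallP => i; rewrite ffunE.
by apply/eqP/eq_bigr => i _; rewrite ffunE.
Qed.

Definition dproj (i : 'I_t) (m : M) : M := xchoose (decomposition_exists m) i.

Lemma dprojP (m : M) : (forall i, dproj i m \in Mi i) /\ m = \sum_i dproj i m.
Proof.
by have /andP [/forallP Mx /eqP] := xchooseP (decomposition_exists m).
Qed.

Lemma dproj_uniq (m : M) (x : 'I_t -> M) :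
  (forall i, x i \in Mi i) -> m = \sum_i x i -> forall i, dproj i m = x i.
Proof.
move=> Mx ->; have [Mp sum_p] := dprojP (\sum_i x i).
exact: (proj2 (proj2 dsM)) _ _ Mp Mx (esym sum_p).
Qed.

Lemma dproj_is_linear (i : 'I_t) : linear (dproj i).
Proof.
move=> a u v; apply: (dproj_uniq (x := fun j => a *: dproj j u + dproj j v)).
  move=> j; have [_ closedMj] := proj1 dsM j.
  by apply: closedMj; apply: (proj1 (dprojP _)).
by rewrite big_split -scaler_sumr -!(proj2 (dprojP _)).
Qed.

HB.instance Definition _ (i : 'I_t) :=
  GRing.isLinear.Build R M M *:%R (dproj i) (dproj_is_linear i).

Lemma dproj_eq0 (m : M) : (forall i, dproj i m = 0) -> m = 0.
Proof. by move=> dm0; rewrite (proj2 (dprojP m)) big1. Qed.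

Definition support_colouring (r : nat) (chi : 'I_t -> M -> 'I_r) (m : M) :
    option ('I_t * 'I_r) :=
  if [pick i | dproj i m != 0] is Some i then Some (i, chi i (dproj i m)) else None.

Variables (k l : nat) (A : 'M[R]_(k, l)).

Lemma support_colouring_mono r (chi : 'I_t -> M -> 'I_r) (p : 'I_l -> M) :
  mono_solution A predT (support_colouring chi) p ->
  exists i, mono_solution A (Mi i) (chi i) (dproj i \o p).
Proof.
move=> [_ [solp [[j0 nzp0] [c colP]]]].
move: (colP j0); rewrite /support_colouring; case: pickP => [i nz_i c_def | supp0 _].
  exists i; split; first by move=> j; apply: (proj1 (dprojP _)).
  split; first exact: mxapp_linear_eq0.
  split; first by exists j0.
  exists (chi i (dproj i (p j0))) => j; move: (colP j).
  by rewrite -c_def /support_colouring; case: pickP => [i' _ [-> ->] | _].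
case/negP: nzp0; apply/eqP/dproj_eq0 => i; exact/eqP/negbFE/supp0.
Qed.

Lemma pr_direct_sum : pr M A <-> exists i, pr_in A (Mi i).
Proof.
split=> [prM | [i prMi] r r_gt0]; last by apply: pr_in_col_sub (prMi r r_gt0).

apply: NNPP => /not_ex_all_not /not_pr_in_uniform [r nprr].
have /fin_all_exists [chi bad_chi] :
    forall i, exists chi : M -> 'I_r, forall p, ~ mono_solution A (Mi i) chi p.
  move=> i; have /not_all_ex_not [chi nochi] := nprr i.
  by exists chi => p sol; apply: nochi; exists p.
have prMC : pr_col M A #|{: option ('I_t * 'I_r)}| by apply: prM; rewrite card_option.
have [p /support_colouring_mono [i]] := pr_in_col_fin prMC (support_colouring chi).
exact: bad_chi.
Qed.

End DirectSum.

Theorem proposition1p6 (R : comPzRingType) (M : lmodType R) (k l : nat)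
    (A : 'M[R]_(k, l)) :
  (forall (N : {pred M}) (Q : lmodType R) (pi : {linear M -> Q}) (r s : nat),
     submod_closed N -> is_quotient N pi -> (1 <= r)%N -> (1 <= s)%N ->
     pr_col M A (r + s) ->
     pr_in_col A N r \/ pr_col Q A s) /\
  (forall (t : nat) (Mi : 'I_t -> {pred M}),
     is_direct_sum Mi ->
     (pr M A <-> exists i : 'I_t, pr_in A (Mi i))).
Proof.
split=> [N Q pi r s _ [_ kerN] _ _ | t Mi dsM]; last exact: pr_direct_sum.
by apply: pr_colD_in_or_image => m /kerN.
Qed.
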